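(* Let $\sigma$ be a non-negative integer and $f\in H^2_\sigma(\mathbb{D})$. Then for every $a\in\mathbb{D}$ there is a constant $C(\sigma,a)$, depending only on $\sigma$ and $a$, such that for all integers $n\ge 1$ $$\left|\left\langle f,\frac{k_{n,a}}{\|k_{n,a}\|}\right\rangle\right|\le C(\sigma,a)\,\frac{1}{n^{\sigma}}\,\|f\|_{H^2_\sigma}.$$
   Context: $\mathbb{D}$ is the open unit disc; $H^2(\mathbb{D})$ the Hardy space with inner product $\langle f,g\rangle=\frac{1}{2\pi}\int_0^{2\pi}f(e^{it})\overline{g(e^{it})}\,dt$ (for $f=\sum c_kz^k$, $\|f\|^2=\sum|c_k|^2$). For $n\in\mathbb{N}$, $a\in\mathbb{D}$: $k_{n,a}(z)=\left(\frac{\partial}{\partial\overline{a}}\right)^n\frac{1}{1-\overline{a}z}=\frac{n!\,z^n}{(1-\overline{a}z)^{n+1}}$. For $\sigma\ge 0$ the Hardy–Sobolev space is $H^2_\sigma(\mathbb{D})=\{f(z)=\sum_{k\ge0}c_kz^k:\ \sum_{k\ge0}|(1+k^\sigma)c_k|^2<\infty\}$ with $\|f\|_{H^2_\sigma}=\left(\sum_{k\ge0}|(1+k^\sigma)c_k|^2\right)^{1/2}$. *)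

From Stdlib Require Import Reals.
From Coquelicot Require Import Coquelicot.
Open Scope R_scope.

(* An element f(z) = sum_k c_k z^k of H^2(D) (or of a subspace of it) is
   represented by its Taylor coefficient sequence c : nat -> C. *)

Definition H2inner (c d : nat -> C) : C :=
  (Series (fun k => Re (c k * Cconj (d k))%C),
   Series (fun k => Im (c k * Cconj (d k))%C)).

Definition H2norm (d : nat -> C) : R :=
  sqrt (Series (fun k => Cmod (d k) ^ 2)).

Definition sob_weight (sigma k : nat) : R := 1 + INR k ^ sigma.

Definition in_H2sigma (sigma : nat) (c : nat -> C) : Prop :=
  ex_series (fun k => (sob_weight sigma k * Cmod (c k)) ^ 2).

Definition H2sigma_norm (sigma : nat) (c : nat -> C) : R :=
  sqrt (Series (fun k => (sob_weight sigma k * Cmod (c k)) ^ 2)).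

(* Taylor coefficients of k_{n,a}(z) = n! z^n / (1 - conj(a) z)^(n+1)
   = sum_{m >= n} n! * binom(m,n) * conj(a)^(m-n) z^m,
   and n! * binom(m,n) = m! / (m-n)!. *)
Definition kcoef (n : nat) (a : C) (m : nat) : C :=
  if (n <=? m)%nat
  then (RtoC (INR (Factorial.fact m) / INR (Factorial.fact (m - n))) * Cpow (Cconj a) (m - n))%C
  else RtoC 0.

Definition kcoef_normalized (n : nat) (a : C) (m : nat) : C :=
  (kcoef n a m / RtoC (H2norm (kcoef n a)))%C.

(* The kernel k_{n,a} vanishes to order n at 0, so only the tail
   sum_{m >= n} c_m z^m of f pairs with it.  Cauchy-Schwarz against the unit
   vector k_{n,a} / ||k_{n,a}|| bounds the pairing by the H^2 norm of that
   tail, and for m >= n the Sobolev weight 1 + m^sigma is at least n^sigma.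
   Hence the constant can even be taken to be 1, independently of a.  The
   only use of |a| < 1 is that k_{n,a} lies in H^2 (ratio test). *)

From Stdlib Require Import Reals Lra Lia Psatz.
From Coquelicot Require Import Coquelicot.
Open Scope R_scope.

Lemma Series_nonneg (a : nat -> R) :
  ex_series a -> (forall n, 0 <= a n) -> 0 <= Series a.
Proof.
  intros Ha Hpos.
  rewrite <- (Rmult_0_l (Series a)), <- Series_scal_l.
  apply Series_le; [intros n; rewrite Rmult_0_l; split; [lra | apply Hpos] | exact Ha].
Qed.

Lemma Series_le_ex (a b : nat -> R) :
  ex_series a -> ex_series b -> (forall n, a n <= b n) -> Series a <= Series b.
Proof.
  intros Ha Hb Hab.
  assert (Hd : 0 <= Series (fun n => b n - a n)).
  { apply Series_nonneg; [apply (ex_series_minus b a); auto | intros n; specialize (Hab n); lra]. }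
  rewrite Series_minus in Hd by auto. lra.
Qed.

Lemma ex_series_ratio (u : nat -> R) (q : R) (J : nat) :
  0 <= q < 1 -> (forall j, 0 <= u j) ->
  (forall j, (J <= j)%nat -> u (S j) <= q * u j) -> ex_series u.
Proof.
  intros Hq Hu Hratio.
  apply (proj2 (ex_series_incr_n u J)).
  apply (@ex_series_le R_AbsRing R_CompleteNormedModule _ (fun k => u J * q ^ k)).
  - intros k. change (norm (u (J + k)%nat)) with (Rabs (u (J + k)%nat)).
    rewrite Rabs_pos_eq by apply Hu.
    induction k as [|k IHk].
    + rewrite Nat.add_0_r. simpl; lra.
    + replace (J + S k)%nat with (S (J + k)) by lia.
      eapply Rle_trans; [apply Hratio; lia|].
      simpl. pose proof (Hu (J + k)%nat). nra.
  - apply (ex_series_scal_l (u J) (fun k => q ^ k)), ex_series_geom.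
    rewrite Rabs_pos_eq; lra.
Qed.

Lemma ex_series_mul_of_sq (x y : nat -> R) :
  ex_series (fun m => x m ^ 2) -> ex_series (fun m => y m ^ 2) ->
  ex_series (fun m => x m * y m).
Proof.
  intros Hx Hy. apply ex_series_Rabs.
  apply (@ex_series_le R_AbsRing R_CompleteNormedModule _
           (fun m => / 2 * (x m ^ 2 + y m ^ 2))).
  - intros m. change (norm (Rabs (x m * y m))) with (Rabs (Rabs (x m * y m))).
    rewrite Rabs_Rabsolu, Rabs_mult.
    pose proof (pow2_ge_0 (Rabs (x m) - Rabs (y m))).
    rewrite <- (pow2_abs (x m)), <- (pow2_abs (y m)). nra.
  - apply (ex_series_scal_l (/ 2) (fun m => x m ^ 2 + y m ^ 2)).
    apply (ex_series_plus (fun m => x m ^ 2) (fun m => y m ^ 2)); auto.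
Qed.

Lemma le_sqrt_mul_of_amgm (x A B : R) : 0 <= A -> 0 <= B ->
  (forall t, 0 < t -> x <= / 2 * (t * A + B / t)) -> x <= sqrt A * sqrt B.
Proof.
  intros HA HB Hx.
  assert (Hr : 0 <= sqrt A * sqrt B) by (apply Rmult_le_pos; apply sqrt_pos).
  destruct (Rle_lt_dec x 0) as [Hx0|Hx0]; [lra|].
  destruct (Req_dec A 0) as [->|HA0].
  - specialize (Hx ((B + 1) / x) ltac:(apply Rdiv_lt_0_compat; lra)).
    replace (B / ((B + 1) / x)) with (B / (B + 1) * x) in Hx by (field; lra).
    assert (B / (B + 1) < 1) by (apply Rmult_lt_reg_r with (B + 1); field_simplify; lra).
    nra.
  - destruct (Req_dec B 0) as [->|HB0].
    + specialize (Hx (x / A) ltac:(apply Rdiv_lt_0_compat; lra)).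
      replace (x / A * A) with x in Hx by (field; lra). unfold Rdiv in Hx.
      rewrite Rmult_0_l in Hx. lra.
    + assert (HsA : 0 < sqrt A) by (apply sqrt_lt_R0; lra).
      assert (HsB : 0 < sqrt B) by (apply sqrt_lt_R0; lra).
      specialize (Hx (sqrt B / sqrt A) ltac:(apply Rdiv_lt_0_compat; lra)).
      pose proof (sqrt_sqrt A HA) as EA. pose proof (sqrt_sqrt B HB) as EB.
      set (a := sqrt A) in *. set (b := sqrt B) in *. clearbody a b. subst A B.
      replace (/ 2 * (b / a * (a * a) + b * b / (b / a))) with (a * b) in Hx
        by (field; lra).
      exact Hx.
Qed.

Lemma Series_mul_le_sqrt (x y : nat -> R) :
  ex_series (fun m => x m ^ 2) -> ex_series (fun m => y m ^ 2) ->
  Series (fun m => x m * y m)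
    <= sqrt (Series (fun m => x m ^ 2)) * sqrt (Series (fun m => y m ^ 2)).
Proof.
  intros Hx Hy.
  apply le_sqrt_mul_of_amgm;
    [apply Series_nonneg; auto; intros; apply pow2_ge_0 ..|].
  intros t Ht.
  assert (Hamgm : ex_series (fun m => / 2 * (t * x m ^ 2 + / t * y m ^ 2))).
  { apply (ex_series_scal_l (/ 2) (fun m => t * x m ^ 2 + / t * y m ^ 2)).
    apply (ex_series_plus (fun m => t * x m ^ 2) (fun m => / t * y m ^ 2));
      [apply (ex_series_scal_l t (fun m => x m ^ 2)) | apply (ex_series_scal_l (/ t) (fun m => y m ^ 2))];
      auto. }
  replace (/ 2 * (t * Series (fun m => x m ^ 2) + Series (fun m => y m ^ 2) / t))
    with (Series (fun m => / 2 * (t * x m ^ 2 + / t * y m ^ 2))).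
  - apply Series_le_ex; [apply ex_series_mul_of_sq; auto | exact Hamgm |].
    intros m.
    assert (Hsq : 0 <= (t * x m - y m) ^ 2) by apply pow2_ge_0.
    apply (Rmult_le_reg_l t); [exact Ht|].
    replace (t * (/ 2 * (t * x m ^ 2 + / t * y m ^ 2)))
      with (/ 2 * ((t * x m) ^ 2 + y m ^ 2)) by (field; lra).
    nra.
  - rewrite Series_scal_l, Series_plus, !Series_scal_l.
    + unfold Rdiv. ring.
    + apply (ex_series_scal_l t (fun m => x m ^ 2)); auto.
    + apply (ex_series_scal_l (/ t) (fun m => y m ^ 2)); auto.
Qed.

(* With p + iq the sum of the series, p Re z + q Im z <= |p + iq| |z| termwise,
   and summing gives |p + iq|^2 <= |p + iq| sum |z|. *)
Lemma Cmod_Series_le (z : nat -> C) :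
  ex_series (fun m => Cmod (z m)) ->
  Cmod (Series (fun m => Re (z m)), Series (fun m => Im (z m)))
    <= Series (fun m => Cmod (z m)).
Proof.
  intros Hz.
  assert (HRe : ex_series (fun m => Re (z m))).
  { apply (@ex_series_le R_AbsRing R_CompleteNormedModule _ _ (fun m => re_le_Cmod (z m)) Hz). }
  assert (HIm : ex_series (fun m => Im (z m))).
  { apply (@ex_series_le R_AbsRing R_CompleteNormedModule _ (fun m => Cmod (z m))); [|exact Hz].
    intros m. change (norm (Im (z m))) with (Rabs (Im (z m))).
    destruct (z m) as [u v]. eapply Rle_trans; [apply Rmax_r | apply sqrt_plus_sqr]. }
  set (p := Series (fun m => Re (z m))). set (q := Series (fun m => Im (z m))).
  set (r := Cmod (p, q)).
  assert (Hr : 0 <= r) by apply Cmod_ge_0.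
  assert (HS : 0 <= Series (fun m => Cmod (z m))).
  { apply Series_nonneg; auto. intros; apply Cmod_ge_0. }
  assert (Hrr : r * r <= r * Series (fun m => Cmod (z m))).
  { replace (r * r) with (Series (fun m => p * Re (z m) + q * Im (z m))).
    - rewrite <- Series_scal_l. apply Series_le_ex.
      + apply (ex_series_plus (fun m => p * Re (z m)) (fun m => q * Im (z m)));
          [apply (ex_series_scal_l p (fun m => Re (z m)))
          | apply (ex_series_scal_l q (fun m => Im (z m)))]; auto.
      + apply (ex_series_scal_l r (fun m => Cmod (z m))); auto.
      + intros m. unfold r, Cmod. destruct (z m) as [u v]. simpl.
        rewrite !Rmult_1_r. apply sqrt_cauchy.
    - rewrite Series_plus, !Series_scal_l.
      + fold p q. unfold r, Cmod; simpl fst; simpl snd.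
        rewrite sqrt_sqrt by nra. ring.
      + apply (ex_series_scal_l p (fun m => Re (z m))); auto.
      + apply (ex_series_scal_l q (fun m => Im (z m))); auto. }
  destruct (Req_dec r 0) as [->|Hr0]; [exact HS|].
  apply (Rmult_le_reg_l r); lra.
Qed.

Lemma Cmod_H2inner_le (c d : nat -> C) :
  ex_series (fun m => Cmod (c m) ^ 2) -> ex_series (fun m => Cmod (d m) ^ 2) ->
  Cmod (H2inner c d) <= H2norm c * H2norm d.
Proof.
  intros Hc Hd.
  assert (Hmod : forall m, Cmod (c m * Cconj (d m)) = Cmod (c m) * Cmod (d m)).
  { intros m. rewrite Cmod_mult, Cmod_conj. reflexivity. }
  eapply Rle_trans; [apply (Cmod_Series_le (fun m => c m * Cconj (d m))%C)|].
  - apply (ex_series_ext (fun m => Cmod (c m) * Cmod (d m))); [intros; now rewrite Hmod|].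
    apply ex_series_mul_of_sq; auto.
  - rewrite (Series_ext _ (fun m => Cmod (c m) * Cmod (d m))) by apply Hmod.
    apply Series_mul_le_sqrt; auto.
Qed.

Lemma kcoef_lt (n : nat) (a : C) (m : nat) : (m < n)%nat -> kcoef n a m = 0%C.
Proof. intros Hmn. unfold kcoef. destruct (Nat.leb_spec n m); [lia | reflexivity]. Qed.

Lemma Cmod_kcoef_add (n : nat) (a : C) (j : nat) :
  Cmod (kcoef n a (n + j))
    = INR (Factorial.fact (n + j)) / INR (Factorial.fact j) * Cmod a ^ j.
Proof.
  unfold kcoef. destruct (Nat.leb_spec n (n + j)); [|lia].
  replace (n + j - n)%nat with j by lia.
  rewrite Cmod_mult, Cmod_R, Cmod_pow, Cmod_conj, Rabs_pos_eq; [reflexivity|].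
  apply Rle_mult_inv_pos; [apply pos_INR | apply lt_0_INR, Factorial.lt_O_fact].
Qed.

Lemma Cmod_kcoef_succ (n : nat) (a : C) (j : nat) :
  Cmod (kcoef n a (n + S j))
    = (INR n + INR j + 1) / (INR j + 1) * Cmod a * Cmod (kcoef n a (n + j)).
Proof.
  rewrite !Cmod_kcoef_add. replace (n + S j)%nat with (S (n + j)) by lia.
  rewrite !fact_simpl, !mult_INR, !S_INR, plus_INR. simpl pow.
  pose proof (lt_0_INR _ (Factorial.lt_O_fact j)). pose proof (pos_INR j).
  field. lra.
Qed.

(* For j large, (n + j + 1) / (j + 1) * |a| <= (1 + |a|) / 2 < 1. *)
Lemma ex_series_kcoef_sq (n : nat) (a : C) : Cmod a < 1 ->
  ex_series (fun m => Cmod (kcoef n a m) ^ 2).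
Proof.
  intros Ha.
  apply (proj2 (ex_series_incr_n _ n)).
  set (r := Cmod a). assert (Hr : 0 <= r) by apply Cmod_ge_0.
  set (mu := (1 + r) / 2).
  assert (Hgap : (1 - r) / 2 > 0) by (unfold r; lra).
  destruct (INR_archimed _ (INR n * r) Hgap) as [J HJ].
  apply (ex_series_ratio _ (mu ^ 2) J); [unfold mu; split; nra | intros; apply pow2_ge_0 |].
  intros j Hj.
  assert (HJj : INR J <= INR j) by (apply le_INR; lia).
  assert (Hratio : (INR n + INR j + 1) / (INR j + 1) * r <= mu).
  { pose proof (pos_INR j). apply (Rmult_le_reg_l (INR j + 1)); [lra|].
    replace ((INR j + 1) * ((INR n + INR j + 1) / (INR j + 1) * r))
      with ((INR n + INR j + 1) * r) by (field; lra).
    unfold mu.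
    assert ((INR j + 1 - INR J) * (1 - r) >= 0) by nra. nra. }
  assert (Hratio_ge0 : 0 <= (INR n + INR j + 1) / (INR j + 1) * r).
  { pose proof (pos_INR j). pose proof (pos_INR n).
    apply Rmult_le_pos; [apply Rle_mult_inv_pos|]; lra. }
  rewrite Cmod_kcoef_succ. fold r.
  set (x := (INR n + INR j + 1) / (INR j + 1) * r) in *.
  rewrite Rpow_mult_distr. apply Rmult_le_compat_r; [apply pow2_ge_0 | apply pow_incr; lra].
Qed.

Lemma Series_ge_term (u : nat -> R) (k : nat) :
  ex_series u -> (forall m, 0 <= u m) -> u k <= Series u.
Proof.
  intros Hu Hpos.
  rewrite (Series_incr_n u (S k)) by (lia || exact Hu). simpl pred.
  assert (Htail : 0 <= Series (fun m => u (S k + m)%nat)).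
  { apply Series_nonneg; [apply (proj1 (ex_series_incr_n u (S k))), Hu | intros; apply Hpos]. }
  revert Htail. generalize (Series (fun m => u (S k + m)%nat)). intros T HT.
  destruct k as [|k].
  - simpl. lra.
  - simpl sum_f_R0. pose proof (cond_pos_sum u k Hpos). lra.
Qed.

Lemma H2norm_kcoef_gt0 (n : nat) (a : C) : Cmod a < 1 -> 0 < H2norm (kcoef n a).
Proof.
  intros Ha. apply sqrt_lt_R0.
  eapply Rlt_le_trans; [|apply (Series_ge_term _ n (ex_series_kcoef_sq n a Ha))].
  - rewrite <- (Nat.add_0_r n) at 2. rewrite Cmod_kcoef_add, pow_O, Rmult_1_r.
    apply pow_lt, Rdiv_lt_0_compat; apply lt_0_INR, Factorial.lt_O_fact.
  - intros; apply pow2_ge_0.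
Qed.

Lemma Cmod_kcoef_normalized_sq (n : nat) (a : C) (m : nat) : Cmod a < 1 ->
  Cmod (kcoef_normalized n a m) ^ 2
    = / H2norm (kcoef n a) ^ 2 * Cmod (kcoef n a m) ^ 2.
Proof.
  intros Ha. pose proof (H2norm_kcoef_gt0 n a Ha) as HN.
  unfold kcoef_normalized.
  rewrite Cmod_div, Cmod_R, Rabs_pos_eq; [field; lra | lra | intros E; injection E; lra].
Qed.

Lemma ex_series_kcoef_normalized_sq (n : nat) (a : C) : Cmod a < 1 ->
  ex_series (fun m => Cmod (kcoef_normalized n a m) ^ 2).
Proof.
  intros Ha.
  apply (ex_series_ext (fun m => / H2norm (kcoef n a) ^ 2 * Cmod (kcoef n a m) ^ 2)).
  - intros m. symmetry. apply Cmod_kcoef_normalized_sq, Ha.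
  - apply (ex_series_scal_l _ (fun m => Cmod (kcoef n a m) ^ 2)), ex_series_kcoef_sq, Ha.
Qed.

Lemma H2norm_kcoef_normalized (n : nat) (a : C) : Cmod a < 1 ->
  H2norm (kcoef_normalized n a) = 1.
Proof.
  intros Ha. pose proof (H2norm_kcoef_gt0 n a Ha) as HN.
  unfold H2norm at 1.
  rewrite (Series_ext _ _ (fun m => Cmod_kcoef_normalized_sq n a m Ha)), Series_scal_l.
  replace (Series (fun m => Cmod (kcoef n a m) ^ 2)) with (H2norm (kcoef n a) ^ 2).
  - rewrite Rinv_l, sqrt_1 by (apply pow_nonzero; lra). reflexivity.
  - unfold H2norm. rewrite pow2_sqrt; [reflexivity|].
    apply Series_nonneg; [apply ex_series_kcoef_sq, Ha | intros; apply pow2_ge_0].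
Qed.

Lemma kcoef_normalized_lt (n : nat) (a : C) (m : nat) :
  (m < n)%nat -> kcoef_normalized n a m = 0%C.
Proof. intros Hmn. unfold kcoef_normalized. rewrite kcoef_lt by exact Hmn. apply Cmult_0_l. Qed.

Definition H2tail (n : nat) (c : nat -> C) (m : nat) : C :=
  if (n <=? m)%nat then c m else 0%C.

Lemma H2inner_tail (n : nat) (c d : nat -> C) :
  (forall m, (m < n)%nat -> d m = 0%C) -> H2inner c d = H2inner (H2tail n c) d.
Proof.
  intros Hd. unfold H2inner, H2tail.
  assert (Hterm : forall m, (c m * Cconj (d m))%C
                            = ((if (n <=? m)%nat then c m else 0) * Cconj (d m))%C).
  { intros m. destruct (Nat.leb_spec n m) as [_|Hmn]; [reflexivity|].
    rewrite Hd by exact Hmn. unfold Cconj, Cmult; simpl. f_equal; ring. }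
  f_equal; apply Series_ext; intros m; now rewrite Hterm.
Qed.

(* Below n the tail vanishes, and from n on the Sobolev weight is at least n^sigma. *)
Lemma Cmod_H2tail_sq_le (sigma n : nat) (c : nat -> C) (m : nat) : (1 <= n)%nat ->
  Cmod (H2tail n c m) ^ 2
    <= / (INR n ^ sigma) ^ 2 * (sob_weight sigma m * Cmod (c m)) ^ 2.
Proof.
  intros Hn.
  assert (Hs : 0 < INR n ^ sigma) by (apply pow_lt, lt_0_INR; lia).
  unfold H2tail. destruct (Nat.leb_spec n m) as [Hnm|_].
  - assert (Hw : INR n ^ sigma <= sob_weight sigma m).
    { unfold sob_weight.
      assert (INR n ^ sigma <= INR m ^ sigma) by (apply pow_incr; split; [apply pos_INR | apply le_INR, Hnm]).
      lra. }
    pose proof (Cmod_ge_0 (c m)).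
    apply (Rmult_le_reg_l ((INR n ^ sigma) ^ 2)); [apply pow_lt, Hs|].
    rewrite <- Rmult_assoc, Rinv_r, Rmult_1_l by (apply pow_nonzero; lra).
    rewrite <- Rpow_mult_distr. apply pow_incr. split; [nra|].
    apply Rmult_le_compat_r; lra.
  - rewrite Cmod_0, pow_i by lia.
    apply Rmult_le_pos; [left; apply Rinv_0_lt_compat, pow_lt, Hs | apply pow2_ge_0].
Qed.

Lemma ex_series_H2tail_sq (sigma n : nat) (c : nat -> C) :
  (1 <= n)%nat -> in_H2sigma sigma c -> ex_series (fun m => Cmod (H2tail n c m) ^ 2).
Proof.
  intros Hn Hc.
  apply (@ex_series_le R_AbsRing R_CompleteNormedModule _
           (fun m => / (INR n ^ sigma) ^ 2 * (sob_weight sigma m * Cmod (c m)) ^ 2)).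
  - intros m. change (norm (Cmod (H2tail n c m) ^ 2)) with (Rabs (Cmod (H2tail n c m) ^ 2)).
    rewrite Rabs_pos_eq by apply pow2_ge_0. apply (Cmod_H2tail_sq_le sigma), Hn.
  - apply (ex_series_scal_l _ (fun m => (sob_weight sigma m * Cmod (c m)) ^ 2)), Hc.
Qed.

Lemma H2norm_H2tail_le (sigma n : nat) (c : nat -> C) :
  (1 <= n)%nat -> in_H2sigma sigma c ->
  H2norm (H2tail n c) <= / INR n ^ sigma * H2sigma_norm sigma c.
Proof.
  intros Hn Hc.
  assert (Hs : 0 < INR n ^ sigma) by (apply pow_lt, lt_0_INR; lia).
  unfold H2norm, H2sigma_norm.
  rewrite <- (sqrt_pow2 (/ INR n ^ sigma)) by (left; apply Rinv_0_lt_compat, Hs).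
  rewrite <- sqrt_mult_alt by apply pow2_ge_0.
  apply sqrt_le_1_alt. rewrite pow_inv, <- Series_scal_l.
  apply Series_le_ex; [apply (ex_series_H2tail_sq sigma); auto | |].
  - apply (ex_series_scal_l _ (fun m => (sob_weight sigma m * Cmod (c m)) ^ 2)), Hc.
  - intros m. apply (Cmod_H2tail_sq_le sigma), Hn.
Qed.

Theorem theorem7 :
  forall (sigma : nat) (a : C), Cmod a < 1 ->
  exists K : R,
    forall c : nat -> C, in_H2sigma sigma c ->
    forall n : nat, (1 <= n)%nat ->
      Cmod (H2inner c (kcoef_normalized n a))
        <= K * / (INR n ^ sigma) * H2sigma_norm sigma c.
Proof.
  intros sigma a Ha. exists 1. intros c Hc n Hn.
  rewrite (H2inner_tail n) by (intros m; apply kcoef_normalized_lt).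
  eapply Rle_trans.
  { apply Cmod_H2inner_le;
      [apply (ex_series_H2tail_sq sigma) | apply ex_series_kcoef_normalized_sq]; auto. }
  rewrite H2norm_kcoef_normalized, Rmult_1_r, Rmult_1_l by exact Ha.
  apply H2norm_H2tail_le; auto.
Qed.
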